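(* Let $N$ be finite, $\mathbf P$ stochastic on $N$, $0<\beta<1$, $\mathbf R\in\mathbb R^N$ and $S\subseteq N$. For every $i\in N$ and every $j\in S^c$, $$\nu_i^{S\cup\{j\}}=\nu_j^S-\frac{w_i^S}{w_i^{S\cup\{j\}}}\big(\nu_j^S-\nu_i^S\big).$$
   Context: $N$ is a finite state set, $\mathbf{P}=(p_{ij})$ stochastic, $\beta\in(0,1)$, $\mathbf R=(R_j)$; $X(t)$ the Markov chain with matrix $\mathbf P$, $\mathsf E_i$ expectation given $X(0)=i$, $S^c=N\setminus S$. For $S\subseteq N$, $\tau_S=\min\{t\ge0:X(t)\notin S\}$, $f_i^S=\mathsf{E}_i[\sum_{t=0}^{\tau_S-1}R_{X(t)}\beta^t]$, $g_i^S=\mathsf{E}_i[\sum_{t=0}^{\tau_S-1}\beta^t]$, $w_i^S=1+\beta\sum_jp_{ij}g_j^S-\beta g_i^S$ (positive), $r_i^S=R_i+\beta\sum_jp_{ij}f_j^S-\beta f_i^S$, $\nu_i^S=r_i^S/w_i^S$. *)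

From mathcomp Require Import all_boot all_order all_algebra.
From mathcomp Require Import all_classical all_reals all_analysis.
Set Implicit Arguments. Unset Strict Implicit. Unset Printing Implicit Defensive.
Import Order.TTheory GRing.Theory Num.Theory.
Local Open Scope ring_scope.

Section MC.
Variables (R : realType) (N : finType).

Definition stochastic (P : N -> N -> R) : Prop :=
  (forall i j, 0 <= P i j) /\ (forall i, \sum_(j : N) P i j = 1).

(* stay_prob P S t i j = P_i( X(0),...,X(t) all in S and X(t) = j )
   = P_i( tau_S > t, X(t) = j ). *)
Fixpoint stay_prob (P : N -> N -> R) (S : {set N}) (t : nat) (i j : N) : R :=
  match t with
  | 0%N => if (i \in S) && (j == i) then 1 else 0
  | t'.+1 => if j \in S then \sum_(k : N) stay_prob P S t' i k * P k j else 0
  end.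

(* E_i[ sum_{t=0}^{tau_S - 1} c(X(t)) beta^t ]
   = sum_{t>=0} beta^t E_i[ c(X(t)) 1{tau_S > t} ]. *)
Definition disc_exp (P : N -> N -> R) (beta : R) (c : N -> R) (S : {set N}) (i : N) : R :=
  limn (fun n => \sum_(0 <= t < n) beta ^+ t * \sum_(j : N) stay_prob P S t i j * c j).

Definition f_ (P : N -> N -> R) beta (Rw : N -> R) S i := disc_exp P beta Rw S i.
Definition g_ (P : N -> N -> R) beta S i := disc_exp P beta (fun _ => 1) S i.

Definition w_ (P : N -> N -> R) beta S i :=
  1 + beta * \sum_(j : N) P i j * g_ P beta S j - beta * g_ P beta S i.
Definition r_ (P : N -> N -> R) beta Rw S i :=
  Rw i + beta * \sum_(j : N) P i j * f_ P beta Rw S j - beta * f_ P beta Rw S i.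
Definition nu_ (P : N -> N -> R) beta Rw S i :=
  r_ P beta Rw S i / w_ P beta S i.
End MC.

From mathcomp Require Import all_boot all_order all_algebra.
From mathcomp Require Import all_classical all_reals all_analysis.
From mathcomp Require Import ring.
Import Order.TTheory GRing.Theory Num.Theory.
Import numFieldNormedType.Exports.
Local Open Scope ring_scope.

(* For a reward [c], [x := disc_exp P beta c T] is the unique solution of the
   Bellman equation [x k = if k \in T then c k + beta * (P x) k else 0].
   Hence [f' - f] and [g' - g] (primes for [j |: S]) both solve the homogeneous
   equation on [S] and are proportional: [g'_j (f' - f) = f'_j (g' - g)].
   Since [r] and [w] are obtained from [f] and [g] by the same affine map
   [x |-> c + beta (P x - x)], also [g'_j (r' - r) = f'_j (w' - w)]; at [j] one has
   [r'_j = (1 - beta) f'_j] and [w'_j = (1 - beta) g'_j], which identifies the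
   ratio [f'_j / g'_j] with [nu_j^S]. The formula follows by dividing by [w'_i]. *)

Section DiscountedExpectation.
Variables (R : realType) (N : finType) (P : N -> N -> R) (beta : R).
Hypotheses (P_stoch : stochastic P) (beta_gt0 : 0 < beta) (beta_lt1 : beta < 1).

Let P_ge0 i j : 0 <= P i j. Proof. by case: P_stoch. Qed.
Let P_sum1 i : \sum_j P i j = 1. Proof. by case: P_stoch. Qed.
Let beta_ge0 : 0 <= beta. Proof. exact: ltW. Qed.

Lemma stay_prob_ge0 S t i j : 0 <= stay_prob P S t i j.
Proof.
elim: t j => [|t IH] j /=; first by case: ifP.
by case: ifP => // _; apply: sumr_ge0 => k _; rewrite mulr_ge0.
Qed.

Lemma stay_probSl S t i j : stay_prob P S t.+1 i j =
  if i \in S then \sum_l P i l * stay_prob P S t l j else 0.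
Proof.
elim: t i j => [|t IH] i j.
  rewrite /=; case: (boolP (i \in S)) => iS; case: (boolP (j \in S)) => jS //=.
  - rewrite (bigD1 i) //= eqxx mul1r big1 ?addr0 => [|k /negPf->]; last by rewrite mul0r.
    rewrite (bigD1 j) //= jS eqxx mulr1 big1 ?addr0 // => k /negPf kj.
    by rewrite eq_sym kj andbF mulr0.
  - rewrite big1 // => k _; case: ifP => [/andP[kS /eqP jk]|_]; last by rewrite mulr0.
    by rewrite jk kS in jS.
  - by rewrite big1 // => k _; rewrite mul0r.
have -> : stay_prob P S t.+2 i j =
  if j \in S then \sum_k stay_prob P S t.+1 i k * P k j else 0 by [].
case: (boolP (j \in S)) => jS; last first.
  by case: ifP => // _; rewrite big1 // => l _; rewrite /= (negPf jS) mulr0.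
under eq_bigr => k _ do rewrite IH.
case: ifP => _; last by rewrite big1 // => k _; rewrite mul0r.
under eq_bigr => k _ do rewrite mulr_suml.
rewrite exchange_big; apply: eq_bigr => l _ /=.
by rewrite jS mulr_sumr; apply: eq_bigr => k _; rewrite mulrA.
Qed.

Lemma stay_prob_le1 S t i j : stay_prob P S t i j <= 1.
Proof.
elim: t i j => [|t IH] i j; first by rewrite /=; case: ifP.
rewrite stay_probSl; case: ifP => // _; rewrite -(P_sum1 i).
by apply: ler_sum => l _; rewrite ler_piMr.
Qed.

Definition occupation_partial S i j n :=
  \sum_(0 <= t < n) beta ^+ t * stay_prob P S t i j.

Lemma is_cvg_occupation_partial S i j : cvgn (occupation_partial S i j).
Proof.
apply: nondecreasing_is_cvgn.
  apply/nondecreasing_seqP => n; rewrite /occupation_partial big_nat_recr //= lerDl.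
  by rewrite mulr_ge0 ?stay_prob_ge0 ?exprn_ge0.
exists (1 - beta)^-1 => _ [n _ <-].
apply: le_trans (_ : \sum_(0 <= t < n) 1 * beta ^+ t <= _); last first.
  by rewrite -div1r; apply: geometric_le_lim; rewrite ?ger0_norm.
by apply: ler_sum => t _; rewrite mul1r ler_piMr ?stay_prob_le1 ?exprn_ge0.
Qed.

Definition disc_partial (c : N -> R) S i n :=
  \sum_(0 <= t < n) beta ^+ t * \sum_j stay_prob P S t i j * c j.

Lemma disc_exp_limn c S i : disc_exp P beta c S i = limn (disc_partial c S i).
Proof. by []. Qed.

Lemma disc_partialE c S i n :
  disc_partial c S i n = \sum_j c j * occupation_partial S i j n.
Proof.
rewrite /disc_partial; under eq_bigr do rewrite mulr_sumr.
rewrite exchange_big; apply: eq_bigr => j _ /=; rewrite mulr_sumr.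
by apply: eq_bigr => t _; rewrite mulrA mulrC.
Qed.

Lemma is_cvg_disc_partial c S i : cvgn (disc_partial c S i).
Proof.
rewrite (funext (disc_partialE c S i)).
apply/cvg_ex; eexists; apply: cvg_big => [|j _]; first exact: add_continuous.
by apply: cvgMl_tmp; exact: is_cvg_occupation_partial.
Qed.

Lemma disc_partialS c S i n : disc_partial c S i n.+1 =
  if i \in S then c i + beta * \sum_l P i l * disc_partial c S l n else 0.
Proof.
rewrite /disc_partial big_nat_recl // expr0 mul1r.
case: (boolP (i \in S)) => iS; last first.
  rewrite big1 => [|j _]; last by rewrite /= (negPf iS) mul0r.
  rewrite add0r big1 // => t _.
  by rewrite big1 ?mulr0 // => j _; rewrite stay_probSl (negPf iS) mul0r.
congr (_ + _).
  rewrite (bigD1 i) //= iS eqxx mul1r big1 ?addr0 // => j /negPf ->.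
  by rewrite andbF mul0r.
transitivity (\sum_(0 <= t < n) \sum_l
    beta * (P i l * (beta ^+ t * \sum_j stay_prob P S t l j * c j))).
  apply: eq_bigr => t _; under eq_bigr do rewrite stay_probSl iS mulr_suml.
  rewrite exchange_big !mulr_sumr; apply: eq_bigr => l _ /=.
  by rewrite !mulr_sumr; apply: eq_bigr => j _; rewrite exprS; ring.
by rewrite exchange_big mulr_sumr; apply: eq_bigr => l _; rewrite !mulr_sumr.
Qed.

Lemma disc_expE c S i : disc_exp P beta c S i =
  if i \in S then c i + beta * \sum_l P i l * disc_exp P beta c S l else 0.
Proof.
rewrite disc_exp_limn.
apply: cvg_lim => //; rewrite -cvg_shiftS.
under eq_cvg do rewrite /= disc_partialS.
case: ifP => _; last exact: cvg_cst.
apply: cvgD; first exact: cvg_cst.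
apply: cvgMl_tmp; apply: cvg_big => [|l _]; first exact: add_continuous.
by apply: cvgMl_tmp; exact: is_cvg_disc_partial.
Qed.

Lemma disc_exp_ge0 c S i : (forall k, 0 <= c k) -> 0 <= disc_exp P beta c S i.
Proof.
move=> c_ge0; rewrite disc_exp_limn; apply: limr_ge; first exact: is_cvg_disc_partial.
apply: nearW => n; apply: sumr_ge0 => t _.
rewrite mulr_ge0 ?exprn_ge0 //.
by apply: sumr_ge0 => j _; rewrite mulr_ge0 ?stay_prob_ge0.
Qed.

(* Maximum principle: at a maximiser [m] of [|d|], [|d m| <= beta * |d m|]. *)
Lemma bellman_homogeneous_eq0 (S : {set N}) (d : N -> R) :
  (forall k, d k = if k \in S then beta * \sum_l P k l * d l else 0) ->
  forall k, d k = 0.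
Proof.
move=> dE k; have [m _ d_max] := @arg_maxP _ R N k xpredT (fun k => `|d k|) isT.
suff dm_le : `|d m| <= beta * `|d m|.
  have : (1 - beta) * `|d m| <= 0 by rewrite mulrBl mul1r subr_le0.
  rewrite pmulr_rle0 ?subr_gt0 // => dm_le0.
  by apply/eqP; rewrite -normr_le0; exact: le_trans (d_max k isT) dm_le0.
rewrite {1}dE; case: ifP => _; last by rewrite normr0 mulr_ge0.
rewrite normrM ger0_norm // ler_wpM2l //.
rewrite (le_trans (ler_norm_sum _ _ _)) // -[leRHS]mul1r -(P_sum1 m) mulr_suml.
by apply: ler_sum => l _; rewrite normrM ger0_norm //; apply: ler_wpM2l => //; exact: d_max.
Qed.

Lemma disc_exp_out c {S : {set N}} {i} : i \notin S -> disc_exp P beta c S i = 0.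
Proof. by move=> iS; rewrite disc_expE (negPf iS). Qed.

Lemma disc_expB c (S S' : {set N}) i : i \in S -> i \in S' ->
  disc_exp P beta c S' i - disc_exp P beta c S i =
  beta * \sum_l P i l * (disc_exp P beta c S' l - disc_exp P beta c S l).
Proof.
move=> iS iS'; rewrite !(disc_expE c) iS iS' opprD addrACA subrr add0r -mulrBr -sumrB.
by congr (_ * _); apply: eq_bigr => l _; rewrite mulrBr.
Qed.

(* Both differences solve the homogeneous Bellman equation on [S] and vanish
   off [j |: S], so they are determined by their values at [j]. *)
Lemma disc_exp_setU1 c c' (S : {set N}) j k : j \notin S ->
  disc_exp P beta c' (j |: S) j * (disc_exp P beta c (j |: S) k - disc_exp P beta c S k) =
  disc_exp P beta c (j |: S) j * (disc_exp P beta c' (j |: S) k - disc_exp P beta c' S k).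
Proof.
move=> jS; apply/eqP; rewrite -subr_eq0; apply/eqP; move: k.
apply: (bellman_homogeneous_eq0 S) => k.
case: (boolP (k \in S)) => kS.
  rewrite !disc_expB ?setU1r // mulrCA [_ * (beta * _)]mulrCA -mulrBr.
  by congr (_ * _); rewrite !mulr_sumr -sumrB; apply: eq_bigr => l _; ring.
have [->|kj] := eqVneq k j.
  by rewrite !(disc_exp_out _ jS) !subr0 mulrC subrr.
have kjS : k \notin j |: S by rewrite in_setU1 (negPf kj).
by rewrite !(disc_exp_out _ kjS) !(disc_exp_out _ kS) !subrr !mulr0 subrr.
Qed.

Definition drift (x : N -> R) i := beta * \sum_l P i l * x l - beta * x i.

Lemma drift_scaleB a x y i :
  a * (drift x i - drift y i) = drift (fun l => a * (x l - y l)) i.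
Proof.
rewrite /drift; have -> : \sum_l P i l * (a * (x l - y l)) =
    a * (\sum_l P i l * x l - \sum_l P i l * y l).
  by rewrite -sumrB mulr_sumr; apply: eq_bigr => l _; ring.
by ring.
Qed.

Lemma r_w_setU1 Rw (S : {set N}) j i : j \notin S ->
  g_ P beta (j |: S) j * (r_ P beta Rw (j |: S) i - r_ P beta Rw S i) =
  f_ P beta Rw (j |: S) j * (w_ P beta (j |: S) i - w_ P beta S i).
Proof.
move=> jS.
have -> : r_ P beta Rw (j |: S) i - r_ P beta Rw S i =
    drift (f_ P beta Rw (j |: S)) i - drift (f_ P beta Rw S) i.
  by rewrite /r_ /drift; ring.
have -> : w_ P beta (j |: S) i - w_ P beta S i =
    drift (g_ P beta (j |: S)) i - drift (g_ P beta S) i.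
  by rewrite /w_ /drift; ring.
rewrite !drift_scaleB; congr (drift _ i); apply/funext => l.
exact: disc_exp_setU1.
Qed.

Lemma r_in Rw (T : {set N}) i : i \in T -> r_ P beta Rw T i = (1 - beta) * f_ P beta Rw T i.
Proof. by move=> iT; rewrite /r_ /f_ (disc_expE Rw T i) iT; ring. Qed.

Lemma w_in (T : {set N}) i : i \in T -> w_ P beta T i = (1 - beta) * g_ P beta T i.
Proof. by move=> iT; rewrite /w_ /g_ (disc_expE _ T i) iT; ring. Qed.

Let sum_Pg_ge0 T i : 0 <= \sum_l P i l * g_ P beta T l.
Proof. by apply: sumr_ge0 => l _; rewrite mulr_ge0 // disc_exp_ge0. Qed.

Lemma g_ge1_in (T : {set N}) i : i \in T -> 1 <= g_ P beta T i.
Proof. by move=> iT; rewrite /g_ disc_expE iT lerDl mulr_ge0 //; exact: sum_Pg_ge0. Qed.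

Lemma w_gt0 (T : {set N}) i : 0 < w_ P beta T i.
Proof.
have [iT|iT] := boolP (i \in T).
  by rewrite w_in // mulr_gt0 ?subr_gt0 // (lt_le_trans ltr01) ?g_ge1_in.
rewrite /w_ /g_ (disc_exp_out _ iT) mulr0 subr0 (lt_le_trans ltr01) //.
by rewrite lerDl mulr_ge0 //; exact: sum_Pg_ge0.
Qed.

End DiscountedExpectation.

(* If [r' - r] is proportional to [w' - w] with the ratio [b / a] of [r'] to [w'] at [j],
   then [b / a] is also the ratio [r j / w j]. *)
Lemma ratio_update {F : fieldType} {I : Type} (a b : F) (r r' w w' : I -> F) i j :
  a != 0 -> w j != 0 -> w i != 0 -> w' i != 0 ->
  (forall k, a * (r' k - r k) = b * (w' k - w k)) -> a * r' j = b * w' j ->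
  r' i / w' i = r j / w j - w i / w' i * (r j / w j - r i / w i).
Proof.
move=> a0 wj0 wi0 w'i0 rw_prop rw'j.
have rwj : r j / w j = b / a.
  have : a * r j = b * w j.
    by apply: oppr_inj; apply: (@addrI _ (a * r' j)); rewrite -mulrBr rw_prop rw'j mulrBr.
  by move=> arj; apply/eqP; rewrite eqr_div // mulrC arj mulrC.
have r'iE : r' i = (a * r i + b * (w' i - w i)) / a.
  by rewrite -rw_prop -mulrDr addrC subrK [a * _]mulrC mulfK.
by rewrite rwj r'iE; field; rewrite a0 wi0 w'i0.
Qed.

Theorem proposition5 (R : realType) (N : finType) (P : N -> N -> R) (beta : R)
  (Rw : N -> R) (S : {set N}) :
  stochastic P -> 0 < beta -> beta < 1 ->
  forall i j : N, j \notin S ->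
  nu_ P beta Rw (j |: S) i =
    nu_ P beta Rw S j
    - w_ P beta S i / w_ P beta (j |: S) i * (nu_ P beta Rw S j - nu_ P beta Rw S i).
Proof.
move=> P_stoch beta_gt0 beta_lt1 i j jS.
have jjS : j \in j |: S by rewrite setU11.
have w_neq0 T k : w_ P beta T k != 0 by rewrite lt0r_neq0 //; exact: w_gt0.
apply: (ratio_update (g_ P beta (j |: S) j) (f_ P beta Rw (j |: S) j));
  rewrite ?w_neq0 //.
- by rewrite lt0r_neq0 // (lt_le_trans ltr01) ?g_ge1_in.
- by move=> k; apply: r_w_setU1.
- by rewrite r_in // w_in //; ring.
Qed.
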